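(* Let $G$ be a po-group. The po-group $\mathbb Z \overrightarrow{\times} G$ satisfies RDP if and only if $G$ is directed and satisfies RDP.
   Context: A po-group is a (not necessarily Abelian, additively written) group with a partial order $\le$ such that $a\le b$ implies $x+a+y\le x+b+y$; $G^+$ is its positive cone; $G$ is directed if any two elements have a common upper bound. $\mathbb Z \overrightarrow{\times} G$ is the group $\mathbb Z\times G$ (componentwise operation) with the lexicographic order: $(m,g)\le(n,h)$ iff $m<n$, or $m=n$ and $g\le h$. RDP: for all $a_1,a_2,b_1,b_2$ in the positive cone with $a_1+a_2=b_1+b_2$ there are positive $c_{11},c_{12},c_{21},c_{22}$ with $a_1=c_{11}+c_{12}$, $a_2=c_{21}+c_{22}$, $b_1=c_{11}+c_{21}$, $b_2=c_{12}+c_{22}$. *)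

From Stdlib Require Import ZArith.

Record POGroup := {
  pg_car :> Type;
  pg_add : pg_car -> pg_car -> pg_car;
  pg_zero : pg_car;
  pg_opp : pg_car -> pg_car;
  pg_le : pg_car -> pg_car -> Prop;
  pg_addA : forall x y z, pg_add x (pg_add y z) = pg_add (pg_add x y) z;
  pg_add0l : forall x, pg_add pg_zero x = x;
  pg_addr0 : forall x, pg_add x pg_zero = x;
  pg_addNl : forall x, pg_add (pg_opp x) x = pg_zero;
  pg_addrN : forall x, pg_add x (pg_opp x) = pg_zero;
  pg_le_refl : forall x, pg_le x x;
  pg_le_antisym : forall x y, pg_le x y -> pg_le y x -> x = y;
  pg_le_trans : forall x y z, pg_le x y -> pg_le y z -> pg_le x z;
  pg_le_compat : forall a b x y, pg_le a b ->
      pg_le (pg_add (pg_add x a) y) (pg_add (pg_add x b) y)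
}.

Definition RDP_gen (T : Type) (add : T -> T -> T) (zero : T) (le : T -> T -> Prop) : Prop :=
  forall a1 a2 b1 b2 : T,
    le zero a1 -> le zero a2 -> le zero b1 -> le zero b2 ->
    add a1 a2 = add b1 b2 ->
    exists c11 c12 c21 c22 : T,
      le zero c11 /\ le zero c12 /\ le zero c21 /\ le zero c22 /\
      a1 = add c11 c12 /\ a2 = add c21 c22 /\
      b1 = add c11 c21 /\ b2 = add c12 c22.

Definition RDP (G : POGroup) : Prop := @RDP_gen G (pg_add G) (pg_zero G) (pg_le G).

Definition directed (G : POGroup) : Prop :=
  forall x y : G, exists z : G, pg_le G x z /\ pg_le G y z.

(* The lexicographic product Z ->x G: group Z * G componentwise,
   (m,g) <= (n,h) iff m < n, or m = n and g <= h. *)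
Definition lex_add (G : POGroup) (p q : Z * G) : Z * G :=
  ((fst p + fst q)%Z, pg_add G (snd p) (snd q)).
Definition lex_zero (G : POGroup) : Z * G := (0%Z, pg_zero G).
Definition lex_le (G : POGroup) (p q : Z * G) : Prop :=
  (fst p < fst q)%Z \/ (fst p = fst q /\ pg_le G (snd p) (snd q)).

(* Backward direction: given positive a1 + a2 = b1 + b2 in the lexicographic
   product, compare the levels of a1 and b1.  If they differ, the decomposition
   is forced by a single element of positive level, which is positive whatever
   its G-component.  If they agree, directedness supplies common lower bounds
   t of the first G-components and u of the second ones (to be taken 0 at
   level 0), and RDP in G applied to the shifted elements -t + x1, x2 - u,
   -t + y1, y2 - u gives the decomposition.
   Forward direction: RDP of G is RDP of the level-0 copy of G, and decomposing
   (1, x) + (1, -x) = (1, 0) + (1, 0) produces a positive upper bound of any x,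
   which makes G directed. *)

From Stdlib Require Import ZArith Lia.

Local Notation "a +. b" := (pg_add _ a b) (at level 50, left associativity).
Local Notation "-. a" := (pg_opp _ a) (at level 35, right associativity).
Local Notation "a <=. b" := (pg_le _ a b) (at level 70).
Local Notation o := (pg_zero _).

Definition riesz_decomposable {T : Type} (add : T -> T -> T) (zero : T)
    (le : T -> T -> Prop) (a1 a2 b1 b2 : T) : Prop :=
  exists c11 c12 c21 c22 : T,
    le zero c11 /\ le zero c12 /\ le zero c21 /\ le zero c22 /\
    a1 = add c11 c12 /\ a2 = add c21 c22 /\
    b1 = add c11 c21 /\ b2 = add c12 c22.

Lemma riesz_decomposable_sym {T : Type} (add : T -> T -> T) (zero : T)
    (le : T -> T -> Prop) (a1 a2 b1 b2 : T) :
  riesz_decomposable add zero le a1 a2 b1 b2 ->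
  riesz_decomposable add zero le b1 b2 a1 a2.
Proof.
  intros (c11 & c12 & c21 & c22 & P11 & P12 & P21 & P22 & E1 & E2 & E3 & E4).
  exists c11, c21, c12, c22; tauto.
Qed.

Section POGroupTheory.

Variable G : POGroup.
Implicit Types a b c t u x y : G.

Lemma addNKl a b : a +. (-. a +. b) = b.
Proof. now rewrite (pg_addA G), (pg_addrN G), (pg_add0l G). Qed.

Lemma addrK a b : a +. b +. -. b = a.
Proof. now rewrite <- (pg_addA G), (pg_addrN G), (pg_addr0 G). Qed.

Lemma addrNK a b : a +. -. b +. b = a.
Proof. now rewrite <- (pg_addA G), (pg_addNl G), (pg_addr0 G). Qed.

Lemma opp_unique a b : a +. b = o -> a = -. b.
Proof. intro E. now rewrite <- (addrK a b), E, (pg_add0l G). Qed.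

Lemma opp0 : -. (pg_zero G) = o.
Proof. symmetry. apply opp_unique, (pg_add0l G). Qed.

Lemma oppK a : -. -. a = a.
Proof. symmetry. apply opp_unique, (pg_addrN G). Qed.

Lemma le_addl c a b : a <=. b -> c +. a <=. c +. b.
Proof.
  intro H. pose proof (pg_le_compat G a b c o H) as K.
  now rewrite !(pg_addr0 G) in K.
Qed.

Lemma le_addr c a b : a <=. b -> a +. c <=. b +. c.
Proof.
  intro H. pose proof (pg_le_compat G a b o c H) as K.
  now rewrite !(pg_add0l G) in K.
Qed.

Lemma le_opp a b : a <=. b -> -. b <=. -. a.
Proof.
  intro H. pose proof (pg_le_compat G a b (-. b) (-. a) H) as K.
  now rewrite addrK, (pg_addNl G), (pg_add0l G) in K.
Qed.

Lemma le_addr_ge0 a b : o <=. b -> a <=. a +. b.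
Proof. intro H. apply (le_addl a) in H. now rewrite (pg_addr0 G) in H. Qed.

Lemma le_addl_ge0 a b : o <=. b -> a <=. b +. a.
Proof. intro H. apply (le_addr a) in H. now rewrite (pg_add0l G) in H. Qed.

Lemma le_addr_opp_ge0 a b : o <=. b -> a +. -. b <=. a.
Proof.
  intro H. apply le_opp, (le_addl a) in H.
  now rewrite opp0, (pg_addr0 G) in H.
Qed.

Lemma le_addl_opp_ge0 a b : o <=. b -> -. b +. a <=. a.
Proof.
  intro H. apply le_opp, (le_addr a) in H.
  now rewrite opp0, (pg_add0l G) in H.
Qed.

Lemma directed_lower_bound :
  directed G -> forall x y, exists t, t <=. x /\ t <=. y.
Proof.
  intros Hdir x y. destruct (Hdir (-. x) (-. y)) as (z & Hx & Hy).
  exists (-. z). apply le_opp in Hx, Hy. rewrite oppK in Hx, Hy. now split.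
Qed.

Lemma directed_of_ge0_upper_bound :
  (forall x, exists z, x <=. z /\ o <=. z) -> directed G.
Proof.
  intros Hub x y.
  destruct (Hub x) as (zx & Hx & Hzx), (Hub y) as (zy & Hy & Hzy).
  exists (zx +. zy). split.
  - exact (pg_le_trans G _ _ _ Hx (le_addr_ge0 zx zy Hzy)).
  - exact (pg_le_trans G _ _ _ Hy (le_addl_ge0 zy zx Hzx)).
Qed.

Lemma RDP_lower_bounds {x1 x2 y1 y2 t u} : RDP G ->
  x1 +. x2 = y1 +. y2 -> t <=. x1 -> t <=. y1 -> u <=. x2 -> u <=. y2 ->
  exists c11 c12 c21 c22,
    t <=. c11 /\ o <=. c12 /\ o <=. c21 /\ u <=. c22 /\
    x1 = c11 +. c12 /\ x2 = c21 +. c22 /\ y1 = c11 +. c21 /\ y2 = c12 +. c22.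
Proof.
  intros Hrdp E Htx Hty Hux Huy.
  assert (Hshift_l : forall v, t <=. v -> o <=. -. t +. v).
  { intros v Hv. apply (le_addl (-. t)) in Hv. now rewrite (pg_addNl G) in Hv. }
  assert (Hshift_r : forall v, u <=. v -> o <=. v +. -. u).
  { intros v Hv. apply (le_addr (-. u)) in Hv. now rewrite (pg_addrN G) in Hv. }
  destruct (Hrdp (-. t +. x1) (x2 +. -. u) (-. t +. y1) (y2 +. -. u))
    as (h11 & h12 & h21 & h22 & P11 & P12 & P21 & P22 & E1 & E2 & E3 & E4);
    auto.
  { rewrite <- !(pg_addA G), (pg_addA G x1), E. now rewrite <- (pg_addA G). }
  exists (t +. h11), h12, h21, (h22 +. u).
  repeat split; auto using le_addr_ge0, le_addl_ge0.
  - now rewrite <- (pg_addA G), <- E1, addNKl.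
  - now rewrite (pg_addA G), <- E2, addrNK.
  - now rewrite <- (pg_addA G), <- E3, addNKl.
  - now rewrite (pg_addA G), <- E4, addrNK.
Qed.

Local Notation lex_ge0 p := (lex_le G (lex_zero G) p).
Local Notation lex_decomposable :=
  (riesz_decomposable (lex_add G) (lex_zero G) (lex_le G)).

Lemma lex_add_pair m n x y : lex_add G (m, x) (n, y) = ((m + n)%Z, x +. y).
Proof. reflexivity. Qed.

Lemma lex_ge0_level {k x} : lex_ge0 (k, x) -> (0 <= k)%Z.
Proof. intros [H | [H _]]; simpl in *; lia. Qed.

Lemma lex_ge0_level0 {x} : lex_ge0 (0%Z, x) -> o <=. x.
Proof. intros [H | [_ H]]; simpl in *; [lia | exact H]. Qed.

Lemma lex_ge0_pos k x : (0 < k)%Z -> lex_ge0 (k, x).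
Proof. now left. Qed.

Lemma lex_ge0_zero x : o <=. x -> lex_ge0 (0%Z, x).
Proof. now right. Qed.

Lemma lex_le_snd p k x y : lex_le G p (k, x) -> x <=. y -> lex_le G p (k, y).
Proof.
  intros [H | [Hk H]] Hxy; [now left |].
  right. split; [exact Hk | exact (pg_le_trans G _ _ _ H Hxy)].
Qed.

Lemma lex_common_lower_bound {k x y} : directed G ->
  lex_ge0 (k, x) -> lex_ge0 (k, y) ->
  exists t, t <=. x /\ t <=. y /\ lex_ge0 (k, t).
Proof.
  intros Hdir Hx Hy.
  destruct (Z.eq_dec k 0) as [-> | Hk].
  - exists o. repeat split; auto using lex_ge0_level0, lex_ge0_zero, pg_le_refl.
  - destruct (directed_lower_bound Hdir x y) as (t & Htx & Hty).
    exists t. repeat split; auto.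
    apply lex_ge0_pos. apply lex_ge0_level in Hx. lia.
Qed.

Lemma lex_decomposable_level_lt m1 m2 n1 n2 x1 x2 y1 y2 :
  (m1 < n1)%Z -> (m1 + m2 = n1 + n2)%Z -> x1 +. x2 = y1 +. y2 ->
  lex_ge0 (m1, x1) -> lex_ge0 (n2, y2) ->
  lex_decomposable (m1, x1) (m2, x2) (n1, y1) (n2, y2).
Proof.
  intros Hlt Hm Hx P1 P2.
  exists (m1, x1), (0%Z, o), ((n1 - m1)%Z, x2 +. -. y2), (n2, y2).
  repeat split; auto using lex_ge0_pos, lex_ge0_zero, pg_le_refl with zarith;
    rewrite lex_add_pair; f_equal; try lia.
  - now rewrite (pg_addr0 G).
  - now rewrite addrNK.
  - now rewrite (pg_addA G), Hx, addrK.
  - now rewrite (pg_add0l G).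
Qed.

Lemma lex_decomposable_level_eq : directed G -> RDP G ->
  forall m1 m2 n1 n2 x1 x2 y1 y2,
  m1 = n1 -> (m1 + m2 = n1 + n2)%Z -> x1 +. x2 = y1 +. y2 ->
  lex_ge0 (m1, x1) -> lex_ge0 (m2, x2) -> lex_ge0 (n1, y1) -> lex_ge0 (n2, y2) ->
  lex_decomposable (m1, x1) (m2, x2) (n1, y1) (n2, y2).
Proof.
  intros Hdir Hrdp m1 m2 n1 n2 x1 x2 y1 y2 <- Hm Hx Pa1 Pa2 Pb1 Pb2.
  assert (n2 = m2) as -> by lia.
  destruct (lex_common_lower_bound Hdir Pa1 Pb1) as (t & Htx & Hty & Pt).
  destruct (lex_common_lower_bound Hdir Pa2 Pb2) as (u & Hux & Huy & Pu).
  destruct (RDP_lower_bounds Hrdp Hx Htx Hty Hux Huy)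
    as (g11 & g12 & g21 & g22 & C11 & C12 & C21 & C22 & E1 & E2 & E3 & E4).
  exists (m1, g11), (0%Z, g12), (0%Z, g21), (m2, g22).
  repeat split; eauto using lex_le_snd, lex_ge0_zero;
    rewrite lex_add_pair; f_equal; auto with zarith.
Qed.

Lemma lex_RDP_of_directed_RDP :
  directed G -> RDP G -> @RDP_gen (Z * G) (lex_add G) (lex_zero G) (lex_le G).
Proof.
  intros Hdir Hrdp [m1 x1] [m2 x2] [n1 y1] [n2 y2] Pa1 Pa2 Pb1 Pb2 E.
  rewrite !lex_add_pair in E. injection E as Hm Hx.
  destruct (Z.lt_trichotomy m1 n1) as [Hlt | [Heq | Hgt]].
  - now apply lex_decomposable_level_lt.
  - now apply lex_decomposable_level_eq.
  - apply riesz_decomposable_sym, lex_decomposable_level_lt; auto with zarith.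
Qed.

Lemma RDP_of_lex_RDP :
  @RDP_gen (Z * G) (lex_add G) (lex_zero G) (lex_le G) -> RDP G.
Proof.
  intros H a1 a2 b1 b2 Pa1 Pa2 Pb1 Pb2 E.
  destruct (H (0%Z, a1) (0%Z, a2) (0%Z, b1) (0%Z, b2))
    as ([k11 g11] & [k12 g12] & [k21 g21] & [k22 g22]
        & P11 & P12 & P21 & P22 & E1 & E2 & E3 & E4);
    auto using lex_ge0_zero.
  { now rewrite !lex_add_pair, E. }
  rewrite lex_add_pair in E1, E2, E3, E4.
  injection E1 as K1 F1. injection E2 as K2 F2.
  injection E3 as K3 F3. injection E4 as K4 F4.
  pose proof (lex_ge0_level P11). pose proof (lex_ge0_level P12).
  pose proof (lex_ge0_level P21). pose proof (lex_ge0_level P22).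
  assert (k11 = 0%Z /\ k12 = 0%Z /\ k21 = 0%Z /\ k22 = 0%Z)
    as (-> & -> & -> & ->) by lia.
  exists g11, g12, g21, g22. repeat split; auto using lex_ge0_level0.
Qed.

Lemma lex_RDP_ge0_upper_bound :
  @RDP_gen (Z * G) (lex_add G) (lex_zero G) (lex_le G) ->
  forall x, exists z, x <=. z /\ o <=. z.
Proof.
  intros H x.
  destruct (H (1%Z, x) (1%Z, -. x) (1%Z, o) (1%Z, o))
    as ([k11 g11] & [k12 g12] & [k21 g21] & [k22 g22]
        & P11 & P12 & P21 & P22 & E1 & E2 & E3 & E4);
    auto using lex_ge0_pos with zarith.
  { now rewrite !lex_add_pair, (pg_addrN G), (pg_add0l G). }
  rewrite lex_add_pair in E1, E2, E3, E4.
  injection E1 as K1 F1. injection E2 as K2 F2.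
  injection E3 as K3 F3. injection E4 as K4 F4.
  pose proof (lex_ge0_level P11). pose proof (lex_ge0_level P12).
  pose proof (lex_ge0_level P21). pose proof (lex_ge0_level P22).
  (* Level bookkeeping forces one of the two diagonals of the decomposition to
     sit at level 0; the off-diagonal entry of that row is then an inverse of a
     positive element. *)
  assert (k11 = 0%Z /\ k22 = 0%Z \/ k12 = 0%Z /\ k21 = 0%Z)
    as [[-> ->] | [-> ->]] by lia.
  - apply lex_ge0_level0 in P11, P22.
    symmetry in F4. apply opp_unique in F4.
    exists g11. split; [| exact P11].
    rewrite F1, F4. now apply le_addr_opp_ge0.
  - apply lex_ge0_level0 in P12, P21.
    symmetry in F3. apply opp_unique in F3.
    exists g12. split; [| exact P12].
    rewrite F1, F3. now apply le_addl_opp_ge0.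
Qed.

End POGroupTheory.

Theorem theorem3p10 (G : POGroup) :
  @RDP_gen (Z * G) (lex_add G) (lex_zero G) (lex_le G) <-> (directed G /\ RDP G).
Proof.
  split.
  - intro H. split.
    + apply directed_of_ge0_upper_bound, lex_RDP_ge0_upper_bound, H.
    + apply RDP_of_lex_RDP, H.
  - intros [Hdir Hrdp]. now apply lex_RDP_of_directed_RDP.
Qed.
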